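(* Let $(X,\tau)$ be a topological space, $\delta$ a quasi-proximity compatible with $\tau$ such that $\mathcal{V}_\delta$ is transitive, $\mathcal{B}=\mathcal{B}(\mathcal{V}_\delta)$, and let $\mathcal{V}$ be a transitive quasi-uniformity on $X$. Then $\mathcal{V}\in\pi(\delta)$ if and only if $\mathcal{V}_\delta\subseteq\mathcal{V}$ and for every transitive $U\in\mathcal{V}$ and every $A\subseteq X$ we have $U(A)\in\mathcal{B}$.
   Context: Quasi-uniformities and quasi-proximities are in the sense of Fletcher–Lindgren. $\pi(\delta)$ is the set of quasi-uniformities inducing the quasi-proximity $\delta$; $\mathcal{V}_\delta$ is its coarsest (totally bounded) element. A quasi-uniformity is transitive if it has a base of transitive entourages ($U\circ U\subseteq U$). $U(A)=\bigcup_{a\in A}\{y:(a,y)\in U\}$. For $N\subseteq X$, $U_N=(N\times N)\cup((X\setminus N)\times X)$ and $\mathcal{B}(\mathcal{V}_\delta)=\{N\in\tau:U_N\in\mathcal{V}_\delta\}$, an l-base of $\tau$ (closed under finite unions and intersections, containing $\emptyset,X$). *)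

From Stdlib Require Import Classical.

Set Implicit Arguments.

Section Defs.
Variable X : Type.

Definition setT : X -> Prop := fun _ => True.
Definition set0 : X -> Prop := fun _ => False.
Definition setU (A B : X -> Prop) : X -> Prop := fun x => A x \/ B x.
Definition setI (A B : X -> Prop) : X -> Prop := fun x => A x /\ B x.
Definition setC (A : X -> Prop) : X -> Prop := fun x => ~ A x.
Definition set1 (a : X) : X -> Prop := fun x => x = a.

Definition is_topology (tau : (X -> Prop) -> Prop) : Prop :=
  tau setT /\ tau set0 /\
  (forall A B, tau A -> tau B -> tau (setI A B)) /\
  (forall F : (X -> Prop) -> Prop, (forall A, F A -> tau A) ->
     tau (fun x => exists A, F A /\ A x)).

Definition image (U : X -> X -> Prop) (A : X -> Prop) : X -> Prop :=
  fun y => exists a, A a /\ U a y.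

Definition transitive_rel (U : X -> X -> Prop) : Prop :=
  forall x y z, U x y -> U y z -> U x z.

Definition quasi_uniformity (Q : (X -> X -> Prop) -> Prop) : Prop :=
  Q (fun _ _ => True) /\
  (forall R S, Q R -> (forall x y, R x y -> S x y) -> Q S) /\
  (forall R S, Q R -> Q S -> Q (fun x y => R x y /\ S x y)) /\
  (forall R, Q R -> forall x, R x x) /\
  (forall R, Q R -> exists S, Q S /\
       forall x y z, S x y -> S y z -> R x z).

Definition transitive_qu (Q : (X -> X -> Prop) -> Prop) : Prop :=
  forall R, Q R -> exists S, Q S /\ transitive_rel S /\
       forall x y, S x y -> R x y.

(* Quasi-proximity in the sense of Fletcher--Lindgren. *)
Definition quasi_proximity (d : (X -> Prop) -> (X -> Prop) -> Prop) : Prop :=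
  (forall A B C, d (setU A B) C <-> (d A C \/ d B C)) /\
  (forall A B C, d A (setU B C) <-> (d A B \/ d A C)) /\
  (forall A B, d A B -> (exists x, A x) /\ (exists y, B y)) /\
  (forall A B, (exists x, A x /\ B x) -> d A B) /\
  (forall A B, ~ d A B -> exists C, ~ d A C /\ ~ d (setC C) B).

Definition qp_open (d : (X -> Prop) -> (X -> Prop) -> Prop) (G : X -> Prop) : Prop :=
  forall x, G x -> ~ d (set1 x) (setC G).

Definition compatible (d : (X -> Prop) -> (X -> Prop) -> Prop)
  (tau : (X -> Prop) -> Prop) : Prop :=
  forall G, tau G <-> qp_open d G.

Definition qu_proximity (Q : (X -> X -> Prop) -> Prop) (A B : X -> Prop) : Prop :=
  forall R, Q R -> exists x y, A x /\ B y /\ R x y.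

Definition in_pi (d : (X -> Prop) -> (X -> Prop) -> Prop)
  (Q : (X -> X -> Prop) -> Prop) : Prop :=
  quasi_uniformity Q /\ (forall A B, qu_proximity Q A B <-> d A B).

Definition coarsest_in_pi (d : (X -> Prop) -> (X -> Prop) -> Prop)
  (Vd : (X -> X -> Prop) -> Prop) : Prop :=
  in_pi d Vd /\ (forall W, in_pi d W -> forall R, Vd R -> W R).

Definition U_N (N : X -> Prop) : X -> X -> Prop :=
  fun x y => (N x /\ N y) \/ ~ N x.

Definition in_B (tau : (X -> Prop) -> Prop) (Vd : (X -> X -> Prop) -> Prop)
  (N : X -> Prop) : Prop :=
  tau N /\ Vd (U_N N).

End Defs.

(* If U is a transitive entourage of V, the set N = U(A) is U-closed, so N x (X \ N)
   misses U: N is V-far, hence delta-far, from its complement.  This makes N open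
   and puts U_N into V_delta.  Conversely, if A delta B and S is a transitive
   entourage of V, then U_{S(A)} belongs to V_delta, so some pair (a, b) in A x B
   lies in U_{S(A)}; since A is contained in S(A), b lies in S(A), which yields a
   pair of A x B in S.  As transitive entourages form a base of V, A and B are
   V-near. *)
From Stdlib Require Import Classical.

Section QuasiUniformProximity.
Context {X : Type}.
Implicit Types (Q W : (X -> X -> Prop) -> Prop) (A B N : X -> Prop) (U R : X -> X -> Prop).

Lemma qu_proximity_subl Q A A' B :
  (forall x, A x -> A' x) -> qu_proximity Q A B -> qu_proximity Q A' B.
Proof.
  intros HAA' Hnear R HR.
  destruct (Hnear R HR) as [x [y [Ax [By Rxy]]]].
  exists x, y; auto.
Qed.

Lemma qu_proximity_antimonotone Q W A B :
  (forall R, Q R -> W R) -> qu_proximity W A B -> qu_proximity Q A B.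
Proof. intros HQW Hnear R HR; exact (Hnear R (HQW R HR)). Qed.

Lemma image_transitive_not_near_compl Q U A :
  Q U -> transitive_rel U -> ~ qu_proximity Q (image U A) (setC (image U A)).
Proof.
  intros HU HUt Hnear.
  destruct (Hnear U HU) as [x [y [[a [Aa Uax]] [Ny Uxy]]]].
  apply Ny; exists a; split; [exact Aa | exact (HUt _ _ _ Uax Uxy)].
Qed.

Lemma qp_open_of_not_near_compl Q N :
  ~ qu_proximity Q N (setC N) -> qp_open (qu_proximity Q) N.
Proof.
  intros Hfar x Nx Hnear; apply Hfar.
  apply (qu_proximity_subl Q (set1 x)); [intros y ->; exact Nx | exact Hnear].
Qed.

Lemma U_N_of_not_near_compl Q N :
  (forall R S, Q R -> (forall x y, R x y -> S x y) -> Q S) ->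
  ~ qu_proximity Q N (setC N) -> Q (U_N N).
Proof.
  intros Hup Hfar.
  apply not_all_ex_not in Hfar as [R HR].
  apply imply_to_and in HR as [HR Hmiss].
  apply (Hup R _ HR); intros x y Rxy; unfold U_N.
  destruct (classic (N x)) as [Nx | Nx]; [left | right]; auto.
  split; [exact Nx |].
  apply NNPP; intro Ny; apply Hmiss; exists x, y; auto.
Qed.

Lemma near_of_U_N_image Q S A B :
  (forall x, S x x) -> Q (U_N (image S A)) -> qu_proximity Q A B ->
  exists a b, A a /\ B b /\ S a b.
Proof.
  intros Srefl HUN Hnear.
  destruct (Hnear _ HUN) as [x [y [Ax [By [[_ [a [Aa Say]]] | Nx]]]]].
  - exists a, y; auto.
  - exfalso; apply Nx; exists x; auto.
Qed.

End QuasiUniformProximity.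

Theorem corollary2p5 (X : Type) (tau : (X -> Prop) -> Prop)
  (d : (X -> Prop) -> (X -> Prop) -> Prop)
  (Vd V : (X -> X -> Prop) -> Prop) :
  is_topology tau ->
  quasi_proximity d ->
  compatible d tau ->
  coarsest_in_pi d Vd ->
  transitive_qu Vd ->
  quasi_uniformity V ->
  transitive_qu V ->
  (in_pi d V <->
   ((forall R, Vd R -> V R) /\
    (forall U, V U -> transitive_rel U ->
       forall A : X -> Prop, in_B tau Vd (image U A)))).
Proof.
  intros _ _ Hcomp [[[_ [HVd_up _]] HVd_d] Hcoarsest] _ HV HVt.
  assert (HV_refl : forall R, V R -> forall x, R x x) by apply HV.
  split.
  - intros HVpi; split; [exact (Hcoarsest V HVpi) |].
    intros U HU HUt A.
    destruct HVpi as [_ HV_d].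
    pose proof (image_transitive_not_near_compl V U A HU HUt) as Hfar.
    split.
    + apply Hcomp; intros x Nx Hd; apply HV_d in Hd.
      exact (qp_open_of_not_near_compl V _ Hfar x Nx Hd).
    + apply U_N_of_not_near_compl; [exact HVd_up |].
      rewrite HVd_d; rewrite <- HV_d; exact Hfar.
  - intros [HVd_V HB]; split; [exact HV |].
    intros A B; rewrite <- HVd_d; split.
    + exact (qu_proximity_antimonotone Vd V A B HVd_V).
    + intros Hnear R HR.
      destruct (HVt R HR) as [S [HS [HSt HSR]]].
      destruct (near_of_U_N_image Vd S A B (HV_refl S HS) (proj2 (HB S HS HSt A)) Hnear)
        as [a [b [Aa [Bb Sab]]]].
      exists a, b; auto.
Qed.
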